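(* Let $\Lambda$ be a row-finite source-free $k$-graph. In any $\Lambda$-semibranching function system on a measure space $(X,\mu)$, if $(\lambda, \nu)$ is a periodic pair, then $\mu (R_\lambda \,\Delta\, R_\nu) = 0$.
   Context: A $k$-graph is a countable small category $\Lambda$ with a functor $d:\Lambda\to\mathbb{N}^k$ with unique factorization; vertices $\Lambda^0$, range/source $r,s$; row-finite/source-free: paths of a given degree and range form a finite/nonempty set. $\Lambda^\infty$ is the set of infinite paths, $Z(v)$ those with range $v$, and $\lambda x$ denotes prefixing of $\lambda$ to $x\in Z(s(\lambda))$. A pair $(\lambda,\nu)\in\Lambda\times\Lambda$ is periodic if $s(\lambda)=s(\nu)$ and $\lambda x=\nu x$ for all $x\in Z(s(\lambda))$. A $\Lambda$-semibranching function system on $(X,\mu)$: measurable $D_\lambda$, prefixing maps $\tau_\lambda:D_\lambda\to X$, $R_\lambda=\tau_\lambda(D_\lambda)$, coding maps $\tau^m$, such that for each $m\in\mathbb{N}^k$ $\{\tau_\lambda:d(\lambda)=m\}$ is a semibranching function system with coding map $\tau^m$ ($0<\mu(D_\lambda)<\infty$, $\mu(R_\lambda)<\infty$, $\mu(R_\lambda\cap R_\eta)=0$ for distinct $\lambda,\eta$ of degree $m$, $\mu(X\setminus\bigcup_{d(\lambda)=m}R_\lambda)=0$, $d(\mu\circ\tau_\lambda)/d\mu>0$ a.e. on $D_\lambda$, $\tau^m\circ\tau_\lambda=\mathrm{id}$); $\tau_v=\mathrm{id}$ for $v\in\Lambda^0$; for $\nu\in s(\lambda)\Lambda$, $R_\nu\subseteq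 D_\lambda$ a.e. and $\tau_\lambda\tau_\nu=\tau_{\lambda\nu}$ a.e.; $\tau^m\tau^n=\tau^{m+n}$. *)

From HB Require Import structures.
From mathcomp Require Import all_boot all_order all_algebra.
From mathcomp Require Import all_classical all_reals all_analysis.
From mathcomp Require Import measurable_realfun.
Set Implicit Arguments. Unset Strict Implicit. Unset Printing Implicit Defensive.
Import Order.TTheory GRing.Theory Num.Theory.
Local Open Scope classical_set_scope.
Local Open Scope ring_scope.

Definition Nk (k : nat) := {ffun 'I_k -> nat}.
Definition zeroNk (k : nat) : Nk k := [ffun _ => 0%N].
Definition addNk (k : nat) (m n : Nk k) : Nk k := [ffun i => (m i + n i)%N].
Definition subNk (k : nat) (m n : Nk k) : Nk k := [ffun i => (m i - n i)%N].
Definition leNk (k : nat) (m n : Nk k) : Prop := forall i, (m i <= n i)%N.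

(* A countable small category (objects [kV], morphisms [kP], identities [kid],
   composition [kcomp l m] = "l m", meaningful when s l = r m) with a degree
   functor [kd] to N^k satisfying unique factorization. *)
Record kgraph (k : nat) := KGraph {
  kV : countType;
  kP : countType;
  kr : kP -> kV;
  ks : kP -> kV;
  kid : kV -> kP;
  kcomp : kP -> kP -> kP;
  kd : kP -> Nk k;
  kr_id : forall v, kr (kid v) = v;
  ks_id : forall v, ks (kid v) = v;
  kcomp_idl : forall l, kcomp (kid (kr l)) l = l;
  kcomp_idr : forall l, kcomp l (kid (ks l)) = l;
  kr_comp : forall l m, ks l = kr m -> kr (kcomp l m) = kr l;
  ks_comp : forall l m, ks l = kr m -> ks (kcomp l m) = ks m;
  kcompA : forall l m n, ks l = kr m -> ks m = kr n ->
     kcomp l (kcomp m n) = kcomp (kcomp l m) n;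
  kd_id : forall v, kd (kid v) = zeroNk k;
  kd_comp : forall l m, ks l = kr m -> kd (kcomp l m) = addNk (kd l) (kd m);
  kfactor : forall l (m n : Nk k), kd l = addNk m n ->
     exists mu nu, [/\ ks mu = kr nu, l = kcomp mu nu, kd mu = m & kd nu = n];
  kfactor_uniq : forall l (m n : Nk k) mu nu mu' nu',
     ks mu = kr nu -> l = kcomp mu nu -> kd mu = m -> kd nu = n ->
     ks mu' = kr nu' -> l = kcomp mu' nu' -> kd mu' = m -> kd nu' = n ->
     mu = mu' /\ nu = nu'
}.

Section KGraphDefs.
Variables (k : nat) (G : kgraph k).

Definition row_finite : Prop :=
  forall (v : kV G) (m : Nk k), finite_set [set l : kP G | kr l = v /\ kd l = m].
Definition source_free : Prop :=
  forall (v : kV G) (m : Nk k), exists l : kP G, kr l = v /\ kd l = m.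

(* Infinite paths: degree-preserving functors Ω_k -> Λ, where Ω_k has
   objects N^k and morphisms (m,n) with m <= n, of degree n - m.
   Values of x at pairs (m,n) with ~ m <= n are irrelevant. *)
Definition infinite_path (x : Nk k -> Nk k -> kP G) : Prop :=
  (forall m n, leNk m n -> kd (x m n) = subNk n m) /\
  (forall m n p, leNk m n -> leNk n p ->
      ks (x m n) = kr (x n p) /\ kcomp (x m n) (x n p) = x m p).

Definition ipath_range (x : Nk k -> Nk k -> kP G) : kV G :=
  kr (x (zeroNk k) (zeroNk k)).

(* [prefixed l x y] : y is the infinite path l x, i.e. y(0, d l) = l and
   y(d l + m, d l + n) = x(m, n) for m <= n. *)
Definition prefixed (l : kP G) (x y : Nk k -> Nk k -> kP G) : Prop :=
  [/\ infinite_path y,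
      y (zeroNk k) (kd l) = l &
      forall m n, leNk m n -> y (addNk (kd l) m) (addNk (kd l) n) = x m n].

Definition periodic_pair (l n : kP G) : Prop :=
  ks l = ks n /\
  forall x, infinite_path x -> ipath_range x = ks l ->
    exists y, prefixed l x y /\ prefixed n x y.

End KGraphDefs.

Section SBFS.
Context (k : nat) (G : kgraph k) (dsp : measure_display) (T : measurableType dsp)
        (R : realType) (mu : {measure set T -> \bar R}).
Local Open Scope ereal_scope.

Definition sbfs_range (D : kP G -> set T) (tau : kP G -> T -> T) (l : kP G) : set T :=
  tau l @` D l.

Record semibranching (D : kP G -> set T) (tau : kP G -> T -> T)
    (coding : Nk k -> T -> T) : Prop := {
  (* each {tau_l : d l = m} is a semibranching function system with coding map tau^m *)
  sb_Dmeas : forall l, measurable (D l);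
  sb_Rmeas : forall l, measurable (sbfs_range D tau l);
  sb_Dpos : forall l, 0 < mu (D l);
  sb_Dfin : forall l, mu (D l) < +oo;
  sb_Rfin : forall l, mu (sbfs_range D tau l) < +oo;
  sb_disj : forall l e, kd l = kd e -> l <> e ->
     mu (sbfs_range D tau l `&` sbfs_range D tau e) = 0;
  sb_cover : forall m : Nk k,
     mu (~` [set x | exists l, kd l = m /\ sbfs_range D tau l x]) = 0;
  (* mu o tau_l (A |-> mu (tau_l A), A ⊆ D_l) is a measure on D_l ... *)
  sb_img_meas : forall l A, measurable A -> A `<=` D l -> measurable (tau l @` A);
  sb_RN : forall l : kP G, exists f : T -> \bar R,
     [/\ measurable_fun setT f, (forall x, 0 <= f x),
         (forall A, measurable A -> A `<=` D l ->
            mu (tau l @` A) = \int[mu]_(x in A) f x) &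
         {ae mu, forall x, D l x -> 0 < f x}];
  sb_coding : forall l x, D l x -> coding (kd l) (tau l x) = x;
  sb_vertex : forall v x, D (kid v) x -> tau (kid v) x = x;
  sb_RD : forall l n, kr n = ks l -> mu (sbfs_range D tau n `\` D l) = 0;
  (* tau_l tau_nu = tau_{l nu} a.e. (as partial maps: domains agree a.e.
     and the maps agree a.e. on the common domain) *)
  sb_compD : forall l n, kr n = ks l ->
     mu ((D n `\` D (kcomp l n)) `|` (D (kcomp l n) `\` D n)) = 0;
  sb_comp : forall l n, kr n = ks l ->
     {ae mu, forall x, D n x -> tau l (tau n x) = tau (kcomp l n) x};
  sb_codingD : forall m n x, coding m (coding n x) = coding (addNk m n) x
}.

End SBFS.

From Pilot Require Import Defs.
From HB Require Import structures.
From mathcomp Require Import all_boot all_order all_algebra.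
From mathcomp Require Import all_classical all_reals all_analysis.
From mathcomp Require Import measurable_realfun.
Set Implicit Arguments. Unset Strict Implicit. Unset Printing Implicit Defensive.

(* Almost every point z of R_l lies in some R_(l e) with d(e) = d(n), and also
   in some R_(v c) with d(v) = d(n) and d(c) = d(l).  Ranges of distinct paths
   of the same degree meet in a null set, so l e = v c.  Periodicity, tested on
   an infinite path starting with e (which exists because G has no sources),
   gives l e = n y with d(y) = d(l), hence v = n by unique factorization and
   z lies in R_n.  The first step holds
   because a.e. x in D_l lies in some R_e of the given degree with r(e) = s(l)
   (R_e and D_l sit a.e. inside the domains of the vertices r(e) and s(l), which
   are a.e. disjoint), and then tau_l x = tau_(l e) w; tau_l preserves null
   sets since mu o tau_l has a density. *)

(* kernel.v, imported after Defs, shadows the path composition [kcomp]. *)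
Notation kcomp := Defs.kcomp.

Section Degrees.
Variable k : nat.
Implicit Types m n p : Nk k.

Lemma le0Nk m : leNk (zeroNk k) m. Proof. by move=> i; rewrite ffunE. Qed.

Lemma leNk_addr m n : leNk m (addNk m n).
Proof. by move=> i; rewrite ffunE leq_addr. Qed.

Lemma addNk0 m : addNk m (zeroNk k) = m.
Proof. by apply/ffunP => i; rewrite !ffunE addn0. Qed.

Lemma addNkC m n : addNk m n = addNk n m.
Proof. by apply/ffunP => i; rewrite !ffunE addnC. Qed.

Lemma subNk0 m : subNk m (zeroNk k) = m.
Proof. by apply/ffunP => i; rewrite !ffunE subn0. Qed.

Lemma subNkKC m n : leNk m n -> addNk m (subNk n m) = n.
Proof. by move=> mn; apply/ffunP => i; rewrite !ffunE subnKC. Qed.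

Lemma addKNk m n : subNk (addNk m n) m = n.
Proof. by apply/ffunP => i; rewrite !ffunE addKn. Qed.

Definition maxNk m : nat := \max_(i < k) m i.

Lemma leq_maxNk m i : m i <= maxNk m.
Proof. exact: leq_bigmax. Qed.

Lemma leNk_maxNk m n : leNk m n -> maxNk m <= maxNk n.
Proof. by move=> mn; apply/bigmax_leqP => i _; exact: leq_trans (mn i) (leq_maxNk n i). Qed.

End Degrees.

Section Factorization.
Variables (k : nat) (G : kgraph k).
Implicit Types (a b c : kP G) (m n p : Nk k).

Definition factors a m (bc : kP G * kP G) :=
  [/\ ks bc.1 = kr bc.2, a = kcomp bc.1 bc.2 & kd bc.1 = m].

Lemma factors_unique a m bc bc' : factors a m bc -> factors a m bc' -> bc = bc'.
Proof.
case: bc bc' => [b c] [b' c'] [/= bc ->{a} db] [/= bc' e db'].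
have dc : kd c' = kd c.
  by rewrite -(addKNk m (kd c)) -{1}db -kd_comp // e kd_comp // db' addKNk.
by have [-> ->] := kfactor_uniq bc erefl db erefl bc' e db' dc.
Qed.

Definition factor a m : kP G * kP G :=
  if pselect (exists bc, factors a m bc) is left ex then sval (cid ex) else (a, a).

Lemma factor_eq a m bc : factors a m bc -> factor a m = bc.
Proof.
rewrite /factor => abc; case: pselect => [ex|[]]; last by exists bc.
by case: cid => bc' abc'; apply: factors_unique abc' abc.
Qed.

Lemma factorP a m : leNk m (kd a) -> factors a m (factor a m).
Proof.
move=> ma; have [b [c [bc -> db dc]]] := kfactor (esym (subNkKC ma)).
by rewrite (@factor_eq _ _ (b, c)).
Qed.

Definition prefix a m := (factor a m).1.
Definition suffix a m := (factor a m).2.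

Lemma kd_prefix a m : leNk m (kd a) -> kd (prefix a m) = m.
Proof. by case/factorP. Qed.

Lemma prefix_suffixE a m : leNk m (kd a) ->
  ks (prefix a m) = kr (suffix a m) /\ kcomp (prefix a m) (suffix a m) = a.
Proof. by case/factorP. Qed.

Lemma prefix_full a : prefix a (kd a) = a.
Proof. by rewrite /prefix (@factor_eq _ _ (a, kid (ks a))) // /factors kr_id kcomp_idr. Qed.

Lemma suffix0 a : suffix a (zeroNk k) = a.
Proof. by rewrite /suffix (@factor_eq _ _ (kid (kr a), a)) // /factors ks_id kcomp_idl kd_id. Qed.

Lemma kd_suffix a m : leNk m (kd a) -> kd (suffix a m) = subNk (kd a) m.
Proof.
move=> ma; have [bc {2}<-] := prefix_suffixE ma.
by rewrite kd_comp // kd_prefix // addKNk.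
Qed.

Lemma prefix_comp b c m : ks b = kr c -> leNk m (kd b) ->
  prefix (kcomp b c) m = prefix b m.
Proof.
move=> bc mb; have [ps bE] := prefix_suffixE mb.
have sc : ks (suffix b m) = kr c by rewrite -bc -{2}bE ks_comp.
rewrite /prefix (@factor_eq _ _ (prefix b m, kcomp (suffix b m) c)) //.
split=> /=; last exact: kd_prefix.
  by rewrite kr_comp.
by rewrite kcompA // bE.
Qed.

Lemma prefix_prefix b n p : leNk n p -> leNk p (kd b) ->
  prefix (prefix b p) n = prefix b n.
Proof.
move=> np pb; have [ps bE] := prefix_suffixE pb.
by rewrite -{2}bE prefix_comp // kd_prefix.
Qed.

Lemma suffix_prefix_comp a m n : leNk m n -> leNk n (kd a) ->
  ks (suffix (prefix a n) m) = kr (suffix a n) /\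
  kcomp (suffix (prefix a n) m) (suffix a n) = suffix a m.
Proof.
move=> mn na; have [ps aE] := prefix_suffixE na.
have mp : leNk m (kd (prefix a n)) by rewrite kd_prefix.
have [qs pE] := prefix_suffixE mp.
have ss : ks (suffix (prefix a n) m) = kr (suffix a n) by rewrite -ps -{2}pE ks_comp.
split=> //; rewrite /suffix (@factor_eq a m (prefix (prefix a n) m,
  kcomp (suffix (prefix a n) m) (suffix a n))) //.
split=> /=; first by rewrite kr_comp.
  by rewrite kcompA // pE aE.
exact: kd_prefix.
Qed.

Definition segment a m n := suffix (prefix a n) m.

Lemma kd_segment a m n : leNk m n -> leNk n (kd a) -> kd (segment a m n) = subNk n m.
Proof. by move=> mn na; rewrite /segment kd_suffix kd_prefix. Qed.

Lemma segment_comp a m n p : leNk m n -> leNk n p -> leNk p (kd a) ->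
  ks (segment a m n) = kr (segment a n p) /\
  kcomp (segment a m n) (segment a n p) = segment a m p.
Proof.
move=> mn np pa; rewrite /segment -(prefix_prefix np pa).
by apply: suffix_prefix_comp; rewrite ?kd_prefix.
Qed.

End Factorization.

Section InfinitePaths.
Variables (k : nat) (G : kgraph k).
Implicit Types (a : kP G) (m n : Nk k) (x : Nk k -> Nk k -> kP G).

Lemma ipath_rangeE x n : infinite_path x -> ipath_range x = kr (x (zeroNk k) n).
Proof.
case=> _ xcomp; have [xx <-] := xcomp _ _ n (le0Nk _) (le0Nk n).
by rewrite kr_comp.
Qed.

Lemma prefixed_comp a x y n : prefixed a x y ->
  ks a = kr (x (zeroNk k) n) /\ kcomp a (x (zeroNk k) n) = y (zeroNk k) (addNk (kd a) n).
Proof.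
case=> [[_ ycomp] ya yx].
have [yy yyE] := ycomp _ _ (addNk (kd a) n) (le0Nk (kd a)) (leNk_addr _ n).
have yxE : y (kd a) (addNk (kd a) n) = x (zeroNk k) n.
  by rewrite -yx ?addNk0 //; exact: le0Nk.
by rewrite ya in yy; rewrite -yxE -yyE ya.
Qed.

Lemma periodic_pair_sym a b : periodic_pair a b -> periodic_pair b a.
Proof.
case=> ab per; split=> // x xinf xr.
by have [y [ay by_]] := per x xinf (etrans xr (esym ab)); exists y.
Qed.

Hypothesis Gsf : source_free G.

Definition oneNk : Nk k := [ffun _ => 1].

Definition extend1 a : kP G := sval (cid (Gsf (ks a) oneNk)).

Lemma extend1P a : kr (extend1 a) = ks a /\ kd (extend1 a) = oneNk.
Proof. by rewrite /extend1; case: cid. Qed.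

Definition extend a N := iter N (fun b => kcomp b (extend1 b)) a.

Lemma extendD a N M : extend a (N + M) = extend (extend a M) N.
Proof. exact: iterD. Qed.

Lemma kd_extend a N i : kd (extend a N) i = kd a i + N.
Proof.
elim: N => [|N IH] /=; first by rewrite addn0.
have [r1 d1] := extend1P (extend a N).
by rewrite kd_comp // !ffunE IH d1 ffunE addn1 addnS.
Qed.

Lemma le_kd_extend a n N : maxNk n <= N -> leNk n (kd (extend a N)).
Proof.
move=> nN i; rewrite kd_extend.
by apply: leq_trans (leq_trans (leq_maxNk n i) nN) _; rewrite leq_addl.
Qed.

Lemma prefix_extend a N m : leNk m (kd a) -> prefix (extend a N) m = prefix a m.
Proof.
move=> ma; elim: N => [//|N IH] /=.
have [r1 _] := extend1P (extend a N).
rewrite prefix_comp // => i.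
by apply: leq_trans (ma i) _; rewrite kd_extend leq_addr.
Qed.

(* The infinite path a e_1 e_2 ... with every e_i of degree (1,...,1); its
   segment from m to n already lies in the finite path [extend a (maxNk n)]. *)
Definition ipath_through a m n := segment (extend a (maxNk n)) m n.

Lemma ipath_throughE a m n N : maxNk n <= N ->
  ipath_through a m n = segment (extend a N) m n.
Proof.
move=> nN; rewrite /ipath_through /segment -(subnK nN) extendD.
by rewrite [in RHS]prefix_extend //; exact: le_kd_extend.
Qed.

Lemma ipath_through_infinite a : infinite_path (ipath_through a).
Proof.
split=> [m n mn|m n p mn np].
  by rewrite kd_segment //; exact: le_kd_extend.
rewrite !(ipath_throughE a _ (leqnn (maxNk p))) ?(ipath_throughE a _ (leNk_maxNk np)).
by apply: segment_comp => //; exact: le_kd_extend.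
Qed.

Lemma ipath_through_init a : ipath_through a (zeroNk k) (kd a) = a.
Proof.
by rewrite /ipath_through /segment suffix0 prefix_extend ?prefix_full.
Qed.

Lemma periodic_pair_factor (l n e : kP G) : periodic_pair l n ->
  kr e = ks l -> kd e = kd n ->
  exists z, [/\ ks n = kr z, kcomp l e = kcomp n z & kd z = kd l].
Proof.
move=> [ln per] el de; set x := ipath_through e.
have xinf : infinite_path x := ipath_through_infinite e.
have xe : x (zeroNk k) (kd n) = e by rewrite /x -de ipath_through_init.
have xr : ipath_range x = ks l by rewrite (ipath_rangeE (kd n) xinf) xe.
have [y [ly ny]] := per x xinf xr.
have [_ lyE] := prefixed_comp (kd n) ly.
have [nz nyE] := prefixed_comp (kd l) ny.
exists (x (zeroNk k) (kd l)); split=> //.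
  by rewrite nyE -xe lyE addNkC.
by case: xinf => xd _; rewrite xd ?subNk0 //; exact: le0Nk.
Qed.

End InfinitePaths.

Section AlmostEverywhere.
Local Open Scope classical_set_scope.
Local Open Scope ring_scope.
Context d (T : measurableType d) (R : realType) (mu : {measure set T -> \bar R}).

Lemma ae_forall_count (I : countType) (P : I -> T -> Prop) :
  (forall i, \forall x \ae mu, P i x) -> \forall x \ae mu, forall i, P i x.
Proof.
move=> aeP.
have aeQ j : \forall x \ae mu, forall i, unpickle j = Some i -> P i x.
  case: (unpickle j) => [i|]; last exact: aeW.
  by apply: filterS (aeP i) => x Pix _ [<-].
by apply: filterS (ae_foralln aeQ) => x Qx i; exact: Qx _ _ (pickleK i).
Qed.

Lemma ae_imply (A B : set T) : mu.-negligible (A `\` B) -> {ae mu, forall x, A x -> B x}.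
Proof. by apply: negligibleS => x /not_implyP. Qed.

End AlmostEverywhere.

Section SemibranchingSystems.
Local Open Scope classical_set_scope.
Local Open Scope ring_scope.
Local Open Scope ereal_scope.
Context (k : nat) (G : kgraph k) (dsp : measure_display) (T : measurableType dsp)
  (R : realType) (mu : {measure set T -> \bar R})
  (D : kP G -> set T) (tau : kP G -> T -> T) (coding : Nk k -> T -> T).
Hypothesis Hsb : semibranching mu D tau coding.
Local Notation Rg := (sbfs_range D tau).
Implicit Types (a b e r : kP G) (m p : Nk k).

Let mD a : measurable (D a) := sb_Dmeas Hsb a.
Let mRg a : measurable (Rg a) := sb_Rmeas Hsb a.

Lemma range_vertex v : Rg (kid v) = D (kid v).
Proof.
apply/seteqP; split=> [_ [x Dx <-]|x Dx]; first by rewrite (sb_vertex Hsb Dx).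
by exists x => //; rewrite (sb_vertex Hsb Dx).
Qed.

Lemma negligible_image r N : mu.-negligible N -> mu.-negligible (tau r @` (N `&` D r)).
Proof.
case=> M [mM M0 NM].
have mMD : measurable (M `&` D r) by exact: measurableI.
have [f [mf _ fE _]] := sb_RN Hsb r.
exists (tau r @` (M `&` D r)); split.
- exact: (sb_img_meas Hsb mMD (@subIsetr _ _ _)).
- rewrite (fE _ mMD (@subIsetr _ _ _)); apply: null_set_integral => //.
    exact: measurable_funTS.
  by apply: subset_measure0 M0 => //; exact: subIsetl.
- by move=> _ [x [Nx Dx] <-]; exists x => //; split => //; exact: NM.
Qed.

Lemma ae_image r (P : T -> Prop) : {ae mu, forall x, D r x -> P x} ->
  {ae mu, forall z, Rg r z -> exists x, [/\ D r x, P x & tau r x = z]}.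
Proof.
move=> aeP; apply: negligibleS (negligible_image r aeP) => z /not_implyP[[x Dx xz] nP].
exists x => //; split=> // DP; apply: nP; exists x; split=> //; exact: DP.
Qed.

Lemma ae_cover m : {ae mu, forall x, exists e, kd e = m /\ Rg e x}.
Proof.
apply/negligibleP; last exact: sb_cover Hsb m.
apply: measurableC.
have -> : [set x | exists e, kd e = m /\ Rg e x] = \bigcup_(e in [set e | kd e = m]) Rg e.
  by apply/seteqP; split=> x [e] => [[de Rex]|de Rex]; exists e.
rewrite bigcup_mkcond; apply: countable_bigcupT_measurable => [|e]; first exact: countableP.
by case: ifP.
Qed.

Lemma ae_range_disjoint :
  {ae mu, forall z, forall a b, kd a = kd b -> Rg a z -> Rg b z -> a = b}.
Proof.
apply: ae_forall_count => a; apply: ae_forall_count => b.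
have [<-|ab] := pselect (a = b); first exact: aeW.
have [dab|ndab] := pselect (kd a = kd b); last by apply: aeW => z /ndab.
apply: filterS (ae_imply (A := Rg a) (B := ~` Rg b) _) => [z + _ Ra Rb|].
  by move/(_ Ra).
rewrite setDE setCK; apply/negligibleP; first exact: measurableI.
exact: (sb_disj Hsb dab ab).
Qed.

Lemma ae_range_vertex_domain : {ae mu, forall x, forall e, Rg e x -> D (kid (kr e)) x}.
Proof.
apply: ae_forall_count => e; apply: ae_imply; apply/negligibleP; first exact: measurableD.
by apply: (sb_RD Hsb); rewrite ks_id.
Qed.

Lemma ae_domain_comp a b : kr b = ks a -> {ae mu, forall x, D b x <-> D (kcomp a b) x}.
Proof.
move=> ba; apply: negligibleS (_ : mu.-negligible
    ((D b `\` D (kcomp a b)) `|` (D (kcomp a b) `\` D b))) => [x /= nE|].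
  have [Db|nDb] := pselect (D b x); have [Dab|nDab] := pselect (D (kcomp a b) x).
  - by case: nE.
  - by left.
  - by right.
  - by case: nE.
apply/negligibleP; first by apply: measurableU; exact: measurableD.
exact (sb_compD Hsb ba).
Qed.

Lemma ae_domain_vertex_domain r : {ae mu, forall x, D r x -> D (kid (ks r)) x}.
Proof. by apply: filterS (ae_domain_comp (kr_id (ks r))) => x; rewrite kcomp_idr => -[]. Qed.

Lemma ae_range_source r : {ae mu, forall x, D r x -> forall e, Rg e x -> kr e = ks r}.
Proof.
near=> x => Drx e Rex.
suff kidE : kid (kr e) = kid (ks r) by rewrite -(kr_id (kr e)) kidE kr_id.
apply: (near ae_range_disjoint x) => //; first by rewrite !kd_id.
  by rewrite range_vertex; apply: (near ae_range_vertex_domain x).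
by rewrite range_vertex; apply: (near (ae_domain_vertex_domain r) x).
Unshelve. all: by end_near.
Qed.

Lemma ae_comp r e : kr e = ks r ->
  {ae mu, forall w, D e w -> D (kcomp r e) w /\ tau r (tau e w) = tau (kcomp r e) w}.
Proof.
move=> er; apply: filterS2 (ae_domain_comp er) (sb_comp Hsb er) => w dom comp Dw.
by split; [exact/dom | exact: comp].
Qed.

Lemma ae_range_extends r p :
  {ae mu, forall z, Rg r z -> exists e, [/\ kr e = ks r, kd e = p & Rg (kcomp r e) z]}.
Proof.
have ae_comp_range : {ae mu, forall x, forall e, kr e = ks r -> Rg e x ->
    exists w, [/\ D e w, D (kcomp r e) w /\ tau r (tau e w) = tau (kcomp r e) w
                & tau e w = x]}.
  apply: ae_forall_count => e; have [er|ne] := pselect (kr e = ks r).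
    by apply: filterS (ae_image (ae_comp er)) => x im _.
  by apply: aeW => x /ne.
suff ae_ext : {ae mu, forall x, D r x ->
    exists e, [/\ kr e = ks r, kd e = p & Rg (kcomp r e) (tau r x)]}.
  by apply: filterS (ae_image ae_ext) => z im /im[x [_ ext <-]].
near=> x => Drx.
have [e [de Rex]] : exists e, kd e = p /\ Rg e x by apply: (near (ae_cover p) x).
have er : kr e = ks r by apply: (near (ae_range_source r) x).
have [w [Dew [Drew comp] <-]] : exists w, [/\ D e w,
    D (kcomp r e) w /\ tau r (tau e w) = tau (kcomp r e) w & tau e w = x].
  by apply: (near ae_comp_range x).
by exists e; split => //; rewrite comp; exists w.
Unshelve. all: by end_near.
Qed.

Hypothesis Gsf : source_free G.

Lemma ae_periodic_range_subset l n : periodic_pair l n -> {ae mu, forall z, Rg l z -> Rg n z}.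
Proof.
move=> per.
have ae_ext := ae_forall_count (fun v => ae_range_extends v (kd l)).
near=> z => Rlz.
have [e [el de Rlez]] : exists e, [/\ kr e = ks l, kd e = kd n & Rg (kcomp l e) z].
  by apply: (near (ae_range_extends l (kd n)) z).
have [v [dv Rvz]] : exists v, kd v = kd n /\ Rg v z by apply: (near (ae_cover (kd n)) z).
have [c [cv dc Rvcz]] : exists c, [/\ kr c = ks v, kd c = kd l & Rg (kcomp v c) z].
  by apply: (near ae_ext z).
have lev : kcomp l e = kcomp v c.
  apply: (near ae_range_disjoint z) => //.
  by rewrite !kd_comp // de dc dv addNkC.
have [y [ny lny _]] := periodic_pair_factor Gsf per el de.
have [<- _] : (v, c) = (n, y) by apply: (@factors_unique _ _ (kcomp l e) (kd n)).
exact: Rvz.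
Unshelve. all: by end_near.
Qed.

End SemibranchingSystems.

Local Open Scope classical_set_scope.
Local Open Scope ring_scope.
Local Open Scope ereal_scope.

Theorem proposition4p12 (k : nat) (G : kgraph k)
  (Hrf : row_finite G) (Hsf : source_free G)
  (dsp : measure_display) (T : measurableType dsp) (R : realType)
  (mu : {measure set T -> \bar R})
  (D : kP G -> set T) (tau : kP G -> T -> T) (coding : Nk k -> T -> T)
  (Hsb : semibranching mu D tau coding)
  (l n : kP G) (Hper : periodic_pair l n) :
  mu ((sbfs_range D tau l `\` sbfs_range D tau n)
      `|` (sbfs_range D tau n `\` sbfs_range D tau l)) = 0.
Proof.
have rangeD_negligible a b : periodic_pair a b ->
    mu.-negligible (sbfs_range D tau a `\` sbfs_range D tau b).
  move=> ab; apply: negligibleS (ae_periodic_range_subset Hsb Hsf ab).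
  by move=> z [az nbz] /(_ az).
apply: measure_negligible.
  by apply: measurableU; apply: measurableD; exact: (sb_Rmeas Hsb).
by apply: negligibleU; apply: rangeD_negligible => //; exact: periodic_pair_sym.
Qed.
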